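(* Let $Q_\bullet=(Q_k)_{k\ge0}$ be a weakly increasing Markov chain on $\{1,2,\dots\}$ (i.e. transition matrix $(p_{i,j})$ with $p_{i,j}=0$ for $j<i$), with initial distribution $p_{0,j}:=P(Q_0=j)$ such that $p_{0,j}>0$ for infinitely many $j$. Let $G_j:=\sum_{k\ge0}\mathbf 1(Q_k=j)$ and suppose $P(G_j<\infty)=1$ and $P(G_j=0)<1$ for every $j$, and that $G_1,G_2,\dots$ are independent. Then $$h_j:=P(G_j\ge1)=\frac{p_{0,j}}{p_{0,j}+p_{0,j+1}+\cdots},\qquad \prod_{j\ge1}(1-h_j)=0,$$ and the transition matrix has the form $$p_{i,j}=\mathbf 1(j=i)p_{i,i}+\mathbf 1(j>i)(1-p_{i,i})\,h_j\prod_{k=i+1}^{j-1}(1-h_k)=\mathbf 1(j=i)p_{i,i}+\mathbf 1(j>i)(1-p_{i,i})\frac{p_{0,j}}{p_{0,i+1}+p_{0,i+2}+\cdots}$$ for some self-transition probabilities $p_{i,i}<1$. Moreover (still assuming independence of the $G_j$) the following are equivalent: (a) $p_{i,i}=h_i$ for all $i$; (b) each $G_j$ is geometrically distributed on $\{0,1,2,\dots\}$; (c) $Q_\bullet$ is the weak record chain derived from $(p_{0,j})$. Also the following are equivalent: (a') $p_{i,i}=0$ for all $i$; (b') each $G_j$ has a Bernoulli distribution on $\{0,1\}$; (c') $Q_\bullet$ is the strict record chain derived from $(p_{0,j})$. In all cases, the chain $Q_\bullet$ observed only at its changes of state is a copy of the strict record chain derived from $(p_{0,j})$.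
   Context: Given a probability distribution $(p_{0,j})_{j\ge1}$ on positive integers, the weak record chain is the sequence of weak upper record values of an i.i.d. sequence with law $(p_{0,j})$; it is Markov with initial law $(p_{0,j})$ and transition matrix $p^{\le}_{i,j}=p_{0,j}\mathbf 1(i\le j)/(p_{0,i}+p_{0,i+1}+\cdots)$. The strict record chain is the sequence of strict upper record values; it is Markov with initial law $(p_{0,j})$ and transition matrix $p^{<}_{i,j}=p_{0,j}\mathbf 1(i<j)/(p_{0,i+1}+p_{0,i+2}+\cdots)$. *)

From Stdlib Require Export Reals List.
Open Scope R_scope.

Record is_prob (Om : Type) (F : (Om -> Prop) -> Prop) (P : (Om -> Prop) -> R) : Prop := {
  ps_full : F (fun _ => True);
  ps_compl : forall A, F A -> F (fun w => ~ A w);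
  ps_union : forall A : nat -> Om -> Prop, (forall n, F (A n)) -> F (fun w => exists n, A n w);
  ps_nonneg : forall A, F A -> 0 <= P A;
  ps_total : P (fun _ => True) = 1;
  ps_sigma_add : forall A : nat -> Om -> Prop,
      (forall n, F (A n)) ->
      (forall m n w, m <> n -> A m w -> A n w -> False) ->
      infinite_sum (fun n => P (A n)) (P (fun w => exists n, A n w))
}.

Fixpoint prod_upto (f : nat -> R) (n : nat) : R :=
  match n with O => 1 | S m => prod_upto f m * f m end.

Definition path_prob (p0 : nat -> R) (p : nat -> nat -> R) (x : nat -> nat) (n : nat) : R :=
  p0 (x O) * prod_upto (fun k => p (x k) (x (S k))) n.

(** States are the positive integers 1,2,...; [p0 0 = 0] and row 0 of [p] is irrelevant. *)
Definition is_distribution (p0 : nat -> R) : Prop :=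
  p0 O = 0 /\ (forall j, 0 <= p0 j) /\ infinite_sum p0 1.

Definition is_transition (p : nat -> nat -> R) : Prop :=
  forall i, (1 <= i)%nat -> p i O = 0 /\ (forall j, 0 <= p i j) /\ infinite_sum (p i) 1.

Definition weakly_increasing_kernel (p : nat -> nat -> R) : Prop :=
  forall i j, (j < i)%nat -> p i j = 0.

Definition is_markov {Om : Type} (F : (Om -> Prop) -> Prop) (P : (Om -> Prop) -> R)
  (Q : nat -> Om -> nat) (p0 : nat -> R) (p : nat -> nat -> R) : Prop :=
  (forall k j, F (fun w => Q k w = j)) /\
  forall (n : nat) (x : nat -> nat),
    P (fun w => forall k, (k <= n)%nat -> Q k w = x k) = path_prob p0 p x n.

Definition G_eq {Om : Type} (Q : nat -> Om -> nat) (j n : nat) (w : Om) : Prop :=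
  exists l : list nat, NoDup l /\ length l = n /\ forall k, Q k w = j <-> In k l.

Definition G_ge1 {Om : Type} (Q : nat -> Om -> nat) (j : nat) (w : Om) : Prop :=
  exists k, Q k w = j.

Definition G_finite {Om : Type} (Q : nat -> Om -> nat) (j : nat) (w : Om) : Prop :=
  exists n, G_eq Q j n w.

Definition G_independent {Om : Type} (P : (Om -> Prop) -> R) (Q : nat -> Om -> nat) : Prop :=
  forall (S : list nat) (v : nat -> nat),
    NoDup S -> (forall j, In j S -> (1 <= j)%nat) ->
    P (fun w => forall j, In j S -> G_eq Q j (v j) w)
    = fold_right (fun j acc => P (G_eq Q j (v j)) * acc) 1 S.

Definition tail_sum (p0 : nat -> R) (i : nat) (T : R) : Prop :=
  infinite_sum (fun n => p0 (i + n)%nat) T.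

Definition is_weak_record_kernel (p0 : nat -> R) (p : nat -> nat -> R) : Prop :=
  forall i j, (1 <= i)%nat -> (1 <= j)%nat -> forall T, tail_sum p0 i T ->
    p i j = if Nat.leb i j then p0 j / T else 0.

Definition is_strict_record_kernel (p0 : nat -> R) (p : nat -> nat -> R) : Prop :=
  forall i j, (1 <= i)%nat -> (1 <= j)%nat -> forall T, tail_sum p0 (S i) T ->
    p i j = if Nat.ltb i j then p0 j / T else 0.

(** The event: the first n+1 successive distinct states visited by Q
    (i.e. Q observed at its changes of state) are x 0, x 1, ..., x n. *)
Definition jump_prefix {Om : Type} (Q : nat -> Om -> nat) (n : nat) (x : nat -> nat) (w : Om) : Prop :=
  exists t : nat -> nat,
    t O = O /\
    (forall k, (k < n)%nat ->
        (t k < t (S k))%nat /\ x k <> x (S k) /\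
        (forall s, (t k <= s < t (S k))%nat -> Q s w = x k)) /\
    Q (t n) w = x n.

(* A weakly increasing chain is a.s. monotone, so it jumps through the states
   x 0 < x 1 < ... < x n exactly when these are visited and every other state below x n is
   not. By independence of the G_j this has probability prod h_(x k) * prod (1 - h_m); for
   n = 0 it reads p0 j = h_j * prod_(m<j) (1 - h_m), so prod_(m<=i) (1 - h_m) is the tail
   p0 (i+1) + p0 (i+2) + ..., which tends to 0, and the general case is the strict record
   chain. Summing over the geometric holding time in i, the one-jump probability from i to j
   is p0 i p_(i,j) / (1 - p_(i,i)), which gives the transition matrix. Finally G_1 = ... =
   G_(j-1) = 0 means starting in j, so independence yields
   P (G_j = n + 1) = h_j (1 - p_(j,j)) p_(j,j)^n, and both lists of equivalences are algebra. *)

From Stdlib Require Import Reals List Lia Lra Permutation.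
From Stdlib Require Import Classical FunctionalExtensionality PropExtensionality.
Open Scope R_scope.

Lemma event_ext {Om : Type} (A B : Om -> Prop) : (forall w, A w <-> B w) -> A = B.
Proof.
  intro H; apply functional_extensionality; intro w.
  apply propositional_extensionality; auto.
Qed.

Lemma infinite_sum_eventually (f : nat -> R) (l : R) (N : nat) :
  (forall n, (n >= N)%nat -> sum_f_R0 f n = l) -> infinite_sum f l.
Proof.
  intros H eps Heps; exists N; intros n Hn.
  rewrite H by lia; unfold Rdist; rewrite Rminus_diag, Rabs_R0; lra.
Qed.

Lemma infinite_sum_scal_r (f : nat -> R) (l K : R) :
  infinite_sum f l -> infinite_sum (fun n => f n * K) (l * K).
Proof.
  intros H; destruct (Req_dec K 0) as [->|HK].
  { apply infinite_sum_eventually with 0%nat; intros n _; rewrite <- scal_sum; ring. }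
  assert (HKpos : 0 < Rabs K) by (apply Rabs_pos_lt; auto).
  intros eps Heps; destruct (H (eps / Rabs K)) as [N HN].
  { apply Rdiv_lt_0_compat; auto. }
  exists N; intros n Hn; specialize (HN n Hn); rewrite <- scal_sum; unfold Rdist in *.
  replace (K * sum_f_R0 f n - l * K) with ((sum_f_R0 f n - l) * K) by ring.
  rewrite Rabs_mult; apply (Rmult_lt_compat_r (Rabs K)) in HN; auto.
  replace (eps / Rabs K * Rabs K) with eps in HN by (field; lra); lra.
Qed.

Lemma infinite_sum_ext (f g : nat -> R) (l : R) :
  (forall n, f n = g n) -> infinite_sum f l -> infinite_sum g l.
Proof. intros H; replace g with f; auto; apply functional_extensionality; auto. Qed.

Lemma exists_least (A : nat -> Prop) (n : nat) :
  A n -> exists m, A m /\ forall k, (k < m)%nat -> ~ A k.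
Proof.
  induction n as [n IH] using (well_founded_induction Wf_nat.lt_wf); intros Hn.
  destruct (classic (exists k, (k < n)%nat /\ A k)) as [[k [Hk HAk]]|Hno].
  - exact (IH k Hk HAk).
  - exists n; split; auto; intros k Hk HAk; apply Hno; eauto.
Qed.

Lemma prod_upto_ext (f g : nat -> R) (n : nat) :
  (forall k, (k < n)%nat -> f k = g k) -> prod_upto f n = prod_upto g n.
Proof.
  induction n; intros H; simpl; auto.
  rewrite IHn, H by (intros; try apply H; lia); auto.
Qed.

Lemma prod_upto_Sl (f : nat -> R) (n : nat) : prod_upto f (S n) = f O * prod_upto (fun k => f (S k)) n.
Proof. induction n; simpl in *; [|rewrite IHn]; ring. Qed.

Lemma prod_upto_add (f : nat -> R) (m n : nat) :
  prod_upto f (m + n) = prod_upto f m * prod_upto (fun k => f (m + k)%nat) n.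
Proof.
  induction n; simpl; [rewrite Nat.add_0_r; ring|].
  rewrite Nat.add_succ_r; simpl; rewrite IHn; ring.
Qed.

Lemma prod_upto_const (r : R) (n : nat) : prod_upto (fun _ => r) n = r ^ n.
Proof. induction n; simpl; auto; rewrite IHn; ring. Qed.

Lemma prod_upto_eq0 (f : nat -> R) (n k : nat) : (k < n)%nat -> f k = 0 -> prod_upto f n = 0.
Proof.
  induction n; intros Hk Hf; [lia|simpl].
  destruct (Nat.eq_dec k n) as [->|Hne]; [rewrite Hf|rewrite IHn by (auto; lia)]; ring.
Qed.

Definition prod_list (f : nat -> R) (l : list nat) : R := fold_right (fun j acc => f j * acc) 1 l.

Lemma prod_list_app (f : nat -> R) (l1 l2 : list nat) :
  prod_list f (l1 ++ l2) = prod_list f l1 * prod_list f l2.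
Proof. induction l1; unfold prod_list in *; simpl; [|rewrite IHl1]; ring. Qed.

Lemma prod_list_seq (f : nat -> R) (s n : nat) : prod_list f (seq s n) = prod_upto (fun k => f (s + k)%nat) n.
Proof.
  induction n; auto; rewrite seq_S, prod_list_app, IHn; unfold prod_list; simpl; ring.
Qed.

Lemma prod_list_ext (f g : nat -> R) (l : list nat) :
  (forall k, In k l -> f k = g k) -> prod_list f l = prod_list g l.
Proof.
  induction l; intros H; unfold prod_list in *; simpl; auto.
  rewrite H, IHl; simpl; auto; intros k Hk; apply H; simpl; auto.
Qed.

Fixpoint increasing_states (n : nat) (x : nat -> nat) : Prop :=
  match n with
  | O => (1 <= x O)%nat
  | S m => increasing_states m x /\ (x m < x (S m))%nat
  end.

Lemma not_increasing_states (n : nat) (x : nat -> nat) : ~ increasing_states n x ->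
  x O = O \/ exists k, (k < n)%nat /\ ~ (x k < x (S k))%nat.
Proof.
  induction n; simpl; intros H; [left; lia|].
  destruct (classic (increasing_states n x)) as [Hs|Hs].
  - right; exists n; split; [lia|]; intro; apply H; auto.
  - destruct (IHn Hs) as [H1|[k [Hk1 Hk2]]]; auto; right; exists k; split; auto.
Qed.

Lemma increasing_states_lt (n : nat) (x : nat -> nat) (k : nat) :
  increasing_states n x -> (k < n)%nat -> (x k < x (S k))%nat.
Proof.
  induction n; simpl; intros Hs Hk; [lia|destruct Hs as [Hs Hlt]].
  destruct (Nat.eq_dec k n) as [->|Hne]; auto; apply IHn; auto; lia.
Qed.

(* For increasing states [x 0 < ... < x n]: the states of [1 .. x n] other than the [x k],
   and the [x k] themselves. *)
Fixpoint skipped_states (n : nat) (x : nat -> nat) : list nat :=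
  match n with
  | O => seq 1 (x O - 1)
  | S k => seq (S (x k)) (x (S k) - S (x k)) ++ skipped_states k x
  end.

Fixpoint visited_states (n : nat) (x : nat -> nat) : list nat :=
  match n with O => x O :: nil | S k => x (S k) :: visited_states k x end.

Lemma skipped_visited_states (n : nat) (x : nat -> nat) : increasing_states n x ->
  NoDup (skipped_states n x ++ visited_states n x) /\
  forall m, In m (skipped_states n x ++ visited_states n x) -> (1 <= m <= x n)%nat.
Proof.
  induction n; simpl; intros Hs.
  - split.
    + apply NoDup_app; [apply seq_NoDup|repeat constructor; auto|].
      intros a Ha; apply in_seq in Ha; simpl; lia.
    + intros m Hm; apply in_app_or in Hm; destruct Hm as [Hm|[<-|[]]]; [apply in_seq in Hm|]; lia.
  - destruct Hs as [Hs Hl]; destruct (IHn Hs) as [Hnd Hr].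
    assert (Hxn : (1 <= x n)%nat).
    { enough (Hin : In (x n) (skipped_states n x ++ visited_states n x)) by (apply Hr in Hin; lia).
      apply in_or_app; right; destruct n; simpl; auto. }
    split.
    + apply (Permutation_NoDup (l := seq (S (x n)) (x (S n) - S (x n)) ++
                                     x (S n) :: skipped_states n x ++ visited_states n x)).
      { rewrite <- app_assoc; apply Permutation_app_head, Permutation_middle. }
      apply NoDup_app; [apply seq_NoDup|constructor; auto; intro H; apply Hr in H; lia|].
      intros a Ha; apply in_seq in Ha; intros [H|H]; [lia|apply Hr in H; lia].
    + intros m Hm; repeat (apply in_app_or in Hm; destruct Hm as [Hm|Hm]).
      * apply in_seq in Hm; lia.
      * pose proof (Hr m (in_or_app _ _ _ (or_introl Hm))); lia.
      * destruct Hm as [<-|Hm]; [lia|].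
        pose proof (Hr m (in_or_app _ _ _ (or_intror Hm))); lia.
Qed.

Definition visit_profile {Om : Type} (Q : nat -> Om -> nat) (Z V : list nat) (w : Om) : Prop :=
  (forall z, In z Z -> G_eq Q z 0 w) /\ (forall v, In v V -> G_ge1 Q v w).

Section Paths.

Context {Om : Type} (Q : nat -> Om -> nat) (w : Om).

Definition monotone_path : Prop := forall k, (1 <= Q k w)%nat /\ (Q k w <= Q (S k) w)%nat.

Lemma G_eq_0_iff (j : nat) : G_eq Q j 0 w <-> ~ G_ge1 Q j w.
Proof.
  split.
  - intros [[|k l] [_ [Hl H]]] [k' Hk']; simpl in Hl; try lia; apply (H k'); auto.
  - intros H; exists nil; repeat split; [constructor|simpl; intros Hk; apply H; eexists; eauto|simpl; tauto].
Qed.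

Lemma G_eq_S_visited (j n : nat) : G_eq Q j (S n) w -> G_ge1 Q j w.
Proof. intros [[|k l] [_ [Hl H]]]; simpl in Hl; [lia|exists k; apply H; left; auto]. Qed.

Lemma G_finite_not_constant (i : nat) : G_finite Q i w -> ~ (forall k, Q k w = i).
Proof.
  intros [n [l [_ [_ H]]]] Hconst.
  assert (Hin : In (S (list_max l)) l) by (apply H; auto).
  assert (Hmax : (list_max l <= list_max l)%nat) by lia.
  apply list_max_le in Hmax; rewrite Forall_forall in Hmax; apply Hmax in Hin; lia.
Qed.

Lemma jump_prefix_0_iff (x : nat -> nat) : jump_prefix Q 0 x w <-> Q O w = x O.
Proof.
  split; [intros [t [Ht0 [_ H]]]; rewrite Ht0 in H; auto|].
  intros H; exists (fun _ => O); repeat split; auto; intros; lia.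
Qed.

Hypothesis Hmono : monotone_path.

Lemma monotone_path_le (k k' : nat) : (k <= k')%nat -> (Q k w <= Q k' w)%nat.
Proof. induction 1; [lia|pose proof (proj2 (Hmono m)); lia]. Qed.

Lemma initial_state_iff (j : nat) :
  Q O w = j <-> (forall m, (1 <= m < j)%nat -> ~ G_ge1 Q m w) /\ G_ge1 Q j w.
Proof.
  split.
  - intros H0; split; [intros m Hm [k Hk]|exists O; auto].
    pose proof (monotone_path_le 0 k ltac:(lia)); lia.
  - intros [H1 [k Hk]]; pose proof (monotone_path_le 0 k ltac:(lia)); pose proof (proj1 (Hmono O)).
    destruct (Nat.eq_dec (Q O w) j); auto; exfalso.
    apply (H1 (Q O w)); [lia|exists O; auto].
Qed.

Lemma jump_prefix_S_iff (n : nat) (x : nat -> nat) :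
  jump_prefix Q (S n) x w <->
  jump_prefix Q n x w /\ (x n < x (S n))%nat /\
  (forall m, (x n < m < x (S n))%nat -> ~ G_ge1 Q m w) /\ G_ge1 Q (x (S n)) w.
Proof.
  split.
  - intros [t [Ht0 [Ht Htn]]]; destruct (Ht n ltac:(lia)) as [Hlt [Hne Hconst]].
    assert (Hn : Q (t n) w = x n) by (apply Hconst; lia).
    assert (Hxl : (x n < x (S n))%nat) by (pose proof (monotone_path_le (t n) (t (S n)) ltac:(lia)); lia).
    split; [|split; [auto|split; [|exists (t (S n)); auto]]].
    + exists t; refine (conj Ht0 (conj _ Hn)); intros k Hk; apply Ht; lia.
    + intros m Hm [s Hs]; destruct (Nat.lt_ge_cases s (t (S n))).
      * pose proof (monotone_path_le s (t (S n) - 1) ltac:(lia)).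
        rewrite (Hconst (t (S n) - 1)%nat) in * by lia; lia.
      * pose proof (monotone_path_le (t (S n)) s ltac:(lia)); lia.
  - intros [[t [Ht0 [Ht Htn]]] [Hxl [Hgap [s0 Hs0]]]].
    destruct (exists_least (fun s => Q s w = x (S n)) s0 Hs0) as [s1 [Hs1 Hmin]].
    assert (Hts : (t n < s1)%nat).
    { destruct (Nat.lt_ge_cases (t n) s1) as [|Hle]; auto.
      pose proof (monotone_path_le s1 (t n) Hle); lia. }
    exists (fun k => if Nat.eqb k (S n) then s1 else t k); split; [simpl; auto|split].
    + intros k Hk; replace (Nat.eqb k (S n)) with false by (symmetry; apply Nat.eqb_neq; lia).
      destruct (Nat.eq_dec k n) as [->|Hkn].
      * rewrite Nat.eqb_refl; repeat split; auto; [lia|]; intros s Hs.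
        pose proof (monotone_path_le (t n) s ltac:(lia)); pose proof (monotone_path_le s s1 ltac:(lia)).
        assert (Q s w <> x (S n)) by (apply Hmin; lia).
        destruct (Nat.eq_dec (Q s w) (x n)); auto; exfalso.
        apply (Hgap (Q s w)); [lia|exists s; auto].
      * replace (Nat.eqb (S k) (S n)) with false by (symmetry; apply Nat.eqb_neq; lia); apply Ht; lia.
    + rewrite Nat.eqb_refl; auto.
Qed.

Lemma jump_prefix_iff (n : nat) (x : nat -> nat) :
  jump_prefix Q n x w <->
  increasing_states n x /\ visit_profile Q (skipped_states n x) (visited_states n x) w.
Proof.
  unfold visit_profile; induction n; simpl.
  - rewrite jump_prefix_0_iff, initial_state_iff; split.
    + intros [H1 H2]; split; [destruct H2 as [k Hk]; rewrite <- Hk; apply (Hmono k)|split].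
      * intros z Hz; apply in_seq in Hz; apply G_eq_0_iff, H1; lia.
      * intros v [<-|[]]; auto.
    + intros [_ [H1 H2]]; split; [intros m Hm; apply G_eq_0_iff, H1, in_seq; lia|apply H2; left; auto].
  - rewrite jump_prefix_S_iff, IHn; split.
    + intros [[Hs [Hz Hv]] [Hlt [Hgap Hvis]]]; split; [split; auto|split].
      * intros z Hz'; apply in_app_or in Hz'; destruct Hz' as [Hz'|Hz']; auto.
        apply in_seq in Hz'; apply G_eq_0_iff, Hgap; lia.
      * intros v [<-|Hv']; auto.
    + intros [[Hs Hlt] [Hz Hv]]; split; [split; [auto|split]|split; [auto|split]].
      * intros z Hz'; apply Hz, in_or_app; auto.
      * intros v Hv'; apply Hv; right; auto.
      * intros m Hm; apply G_eq_0_iff, Hz, in_or_app; left; apply in_seq; lia.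
      * apply Hv; left; auto.
Qed.

Lemma holding_time_iff (j n : nat) :
  Q O w = j /\ G_eq Q j (S n) w <-> (forall k, (k <= n)%nat -> Q k w = j) /\ Q (S n) w <> j.
Proof.
  split.
  - intros [H0 [l [Hnd [Hl Hiff]]]].
    assert (Hall : forall k, (k <= n)%nat -> Q k w = j).
    { intros k Hk; destruct (Nat.eq_dec (Q k w) j) as [|Hne]; auto; exfalso.
      assert (Hincl : incl l (seq 0 k)).
      { intros s Hs; apply Hiff in Hs; apply in_seq; destruct (Nat.lt_ge_cases s k) as [|Hks]; [lia|].
        pose proof (monotone_path_le 0 k ltac:(lia)); pose proof (monotone_path_le k s Hks); lia. }
      apply NoDup_incl_length in Hincl; auto; rewrite length_seq in Hincl; lia. }
    split; auto; intros Hn.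
    assert (Hincl : incl (seq 0 (S (S n))) l).
    { intros s Hs; apply in_seq in Hs; apply Hiff.
      destruct (Nat.eq_dec s (S n)) as [->|]; auto; apply Hall; lia. }
    apply NoDup_incl_length in Hincl; [|apply seq_NoDup]; rewrite length_seq in Hincl; lia.
  - intros [Hall Hn]; split; [apply Hall; lia|].
    exists (seq 0 (S n)); split; [apply seq_NoDup|split; [apply length_seq|]].
    intros k; rewrite in_seq; split; [|intros Hk; apply Hall; lia].
    intros Hk; destruct (Nat.lt_ge_cases k (S n)) as [|Hnk]; [lia|exfalso].
    assert (H1 := monotone_path_le n (S n) ltac:(lia)); assert (H2 := monotone_path_le (S n) k Hnk).
    rewrite Hall in H1 by lia; apply Hn; lia.
Qed.

End Paths.

Section Probability.

Context {Om : Type} {F : (Om -> Prop) -> Prop} {P : (Om -> Prop) -> R}.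
Hypothesis HP : is_prob Om F P.

Lemma meas_True : F (fun _ => True).
Proof. exact (ps_full _ _ _ HP). Qed.

Lemma meas_not (A : Om -> Prop) : F A -> F (fun w => ~ A w).
Proof. exact (ps_compl _ _ _ HP A). Qed.

Lemma meas_ex (A : nat -> Om -> Prop) : (forall n, F (A n)) -> F (fun w => exists n, A n w).
Proof. exact (ps_union _ _ _ HP A). Qed.

Lemma meas_ext (A B : Om -> Prop) : (forall w, A w <-> B w) -> F A -> F B.
Proof. intros H; rewrite (event_ext A B H); auto. Qed.

Lemma meas_False : F (fun _ => False).
Proof. apply (meas_ext (fun w => ~ True)); [tauto|apply meas_not, meas_True]. Qed.

Lemma meas_const (c : Prop) : F (fun _ => c).
Proof.
  destruct (classic c) as [H|H].
  - apply (meas_ext (fun _ => True)); [tauto|apply meas_True].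
  - apply (meas_ext (fun _ => False)); [tauto|apply meas_False].
Qed.

Lemma meas_all (A : nat -> Om -> Prop) : (forall n, F (A n)) -> F (fun w => forall n, A n w).
Proof.
  intros H; apply (meas_ext (fun w => ~ exists n, ~ A n w)).
  - intro w; split; [intros H1 n; apply NNPP; intro; apply H1; eauto|intros H1 [n Hn]; auto].
  - apply meas_not, meas_ex; intro n; apply meas_not; auto.
Qed.

Lemma meas_or (A B : Om -> Prop) : F A -> F B -> F (fun w => A w \/ B w).
Proof.
  intros HA HB; apply (meas_ext (fun w => exists n, (match n with O => A | _ => B end) w)).
  - intro w; split; [intros [[|n] H]; auto|intros [H|H]; [exists O|exists 1%nat]; auto].
  - apply meas_ex; intros [|n]; auto.
Qed.

Lemma meas_and (A B : Om -> Prop) : F A -> F B -> F (fun w => A w /\ B w).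
Proof.
  intros HA HB; apply (meas_ext (fun w => ~ (~ A w \/ ~ B w))).
  - intro w; tauto.
  - apply meas_not, meas_or; apply meas_not; auto.
Qed.

Lemma meas_impl (c : Prop) (A : Om -> Prop) : F A -> F (fun w => c -> A w).
Proof.
  intros HA; destruct (classic c) as [H|H].
  - apply (meas_ext A); auto; intro w; tauto.
  - apply (meas_ext (fun _ => True)); [tauto|apply meas_True].
Qed.

Lemma meas_ex_fun (n : nat) (R : (nat -> nat) -> Om -> Prop) :
  (forall t, F (R t)) ->
  (forall t t' w, (forall k, (k <= n)%nat -> t k = t' k) -> R t w -> R t' w) ->
  F (fun w => exists t, R t w).
Proof.
  revert R; induction n as [|n IH]; intros R HR Hloc.
  - apply (meas_ext (fun w => exists c, R (fun _ => c) w)); [|apply meas_ex; auto].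
    intro w; split; [intros [c Hc]; eauto|intros [t Ht]; exists (t O)].
    eapply Hloc; [|exact Ht]; intros k Hk; replace k with O by lia; auto.
  - set (upd t c := fun k => if Nat.eqb k (S n) then c else t k : nat).
    apply (meas_ext (fun w => exists c, exists t, R (upd t c) w)).
    + intro w; split; [intros [c [t Ht]]; eauto|intros [t Ht]; exists (t (S n)), t].
      eapply Hloc; [|exact Ht]; intros k _; unfold upd.
      destruct (Nat.eqb_spec k (S n)); subst; auto.
    + apply meas_ex; intro c; apply IH; auto.
      intros t t' w Htt; apply Hloc; intros k Hk; unfold upd.
      destruct (Nat.eqb_spec k (S n)); auto; apply Htt; lia.
Qed.

Lemma meas_ex_list (R : list nat -> Om -> Prop) : (forall l, F (R l)) -> F (fun w => exists l, R l w).
Proof.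
  assert (Hmap : forall l : list nat, l = map (fun k => nth k l O) (seq 0 (length l))).
  { induction l as [|x l IH]; simpl; auto; f_equal; rewrite <- seq_shift, map_map; exact IH. }
  intros HR; apply (meas_ext (fun w => exists n, exists t, R (map t (seq 0 n)) w)).
  - intro w; split; [intros [n [t H]]; eauto|intros [l Hl]; exists (length l), (fun k => nth k l O)].
    rewrite <- Hmap; auto.
  - apply meas_ex; intro n; apply (meas_ex_fun n); auto.
    intros t t' w Htt; replace (map t' (seq 0 n)) with (map t (seq 0 n)); auto.
    apply map_ext_in; intros a Ha; apply in_seq in Ha; apply Htt; lia.
Qed.

Lemma prob_nonneg (A : Om -> Prop) : F A -> 0 <= P A.
Proof. exact (ps_nonneg _ _ _ HP A). Qed.

(* Sigma-additivity on the constant family [False, False, ...] gives [c + c + ... = c]. *)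
Lemma prob_False : P (fun _ => False) = 0.
Proof.
  assert (Hsum := ps_sigma_add _ _ _ HP (fun _ _ => False) (fun _ => meas_False)).
  specialize (Hsum (fun _ _ _ _ H _ => H)); cbv beta in Hsum.
  replace (fun w : Om => exists _ : nat, False) with (fun _ : Om => False) in Hsum
    by (apply event_ext; intro w; split; [intros []|intros [_ H]; exact H]).
  assert (H0 := prob_nonneg _ meas_False); set (c := P (fun _ => False)) in *.
  destruct (Rle_lt_or_eq_dec _ _ H0) as [Hc|Hc]; [exfalso|auto].
  destruct (Hsum (c / 2)) as [N HN]; [lra|].
  assert (Hconst : forall n, sum_f_R0 (fun _ => c) n = INR (S n) * c).
  { induction n; simpl sum_f_R0; [simpl; ring|rewrite IHn, (S_INR (S n)); ring]. }
  specialize (HN (S N) ltac:(lia)); rewrite Hconst in HN; unfold Rdist in HN.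
  rewrite (S_INR (S N)), (S_INR N) in HN; assert (HNpos := pos_INR N).
  rewrite Rabs_right in HN; nra.
Qed.

Lemma prob_or_disjoint (A B : Om -> Prop) : F A -> F B -> (forall w, A w -> B w -> False) ->
  P (fun w => A w \/ B w) = P A + P B.
Proof.
  intros HA HB Hd.
  set (G n := match n with O => A | 1%nat => B | _ => fun _ => False end).
  assert (HG : forall n, F (G n)) by (intros [|[|n]]; simpl; auto; apply meas_False).
  assert (Hsum : infinite_sum (fun n => P (G n)) (P (fun w => exists n, G n w))).
  { apply (ps_sigma_add _ _ _ HP G HG).
    intros [|[|m]] [|[|n]] w Hmn; simpl; intros; try tauto; eauto. }
  replace (fun w => exists n, G n w) with (fun w => A w \/ B w) in Hsum.
  2:{ apply event_ext; intro w; split; [intros [H|H]; [exists O|exists 1%nat]; auto|].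
      intros [[|[|n]] H]; simpl in H; tauto. }
  apply (uniqueness_sum _ _ _ Hsum), infinite_sum_eventually with 1%nat.
  intros [|n] Hn; [lia|]; induction n; [simpl; ring|].
  simpl sum_f_R0 in *; rewrite IHn by lia; simpl; rewrite prob_False; ring.
Qed.

Lemma prob_split (A B : Om -> Prop) : F A -> F B ->
  P A = P (fun w => A w /\ B w) + P (fun w => A w /\ ~ B w).
Proof.
  intros HA HB; rewrite <- prob_or_disjoint.
  - f_equal; apply event_ext; intro w; destruct (classic (B w)); tauto.
  - apply meas_and; auto.
  - apply meas_and, meas_not; auto.
  - intros w [_ H1] [_ H2]; auto.
Qed.

Lemma prob_not (A : Om -> Prop) : F A -> P (fun w => ~ A w) = 1 - P A.
Proof.
  intros HA; rewrite <- (ps_total _ _ _ HP), (prob_split (fun _ => True) A meas_True HA).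
  replace (fun w => True /\ A w) with A by (apply event_ext; tauto).
  replace (fun w => True /\ ~ A w) with (fun w => ~ A w) by (apply event_ext; tauto); ring.
Qed.

Lemma prob_le (A B : Om -> Prop) : F A -> F B -> (forall w, A w -> B w) -> P A <= P B.
Proof.
  intros HA HB H; rewrite (prob_split B A HB HA).
  replace (fun w => B w /\ A w) with A by (apply event_ext; firstorder).
  assert (0 <= P (fun w => B w /\ ~ A w)) by (apply prob_nonneg, meas_and, meas_not; auto); lra.
Qed.

Lemma prob_le_1 (A : Om -> Prop) : F A -> P A <= 1.
Proof. intros HA; rewrite <- (ps_total _ _ _ HP); apply prob_le; auto; apply meas_True. Qed.

Lemma prob_null_sub (A B : Om -> Prop) : F A -> F B -> (forall w, A w -> B w) -> P B = 0 -> P A = 0.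
Proof. intros HA HB H H0; apply Rle_antisym; [rewrite <- H0; apply prob_le|apply prob_nonneg]; auto. Qed.

(* Disjointify by first occurrence. *)
Lemma prob_ex_null (A : nat -> Om -> Prop) :
  (forall n, F (A n)) -> (forall n, P (A n) = 0) -> P (fun w => exists n, A n w) = 0.
Proof.
  intros HF H0; set (D n w := A n w /\ forall m, (m < n)%nat -> ~ A m w).
  assert (HD : forall n, F (D n)).
  { intro n; apply meas_and, meas_all; auto; intro m; apply meas_impl, meas_not; auto. }
  assert (Hsum : infinite_sum (fun n => P (D n)) (P (fun w => exists n, D n w))).
  { apply (ps_sigma_add _ _ _ HP); auto; intros m n w Hmn [H1 H2] [H3 H4].
    destruct (Nat.lt_gt_cases m n) as [[Hl|Hl] _]; auto; [apply (H4 m)|apply (H2 n)]; auto. }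
  replace (fun w => exists n, D n w) with (fun w => exists n, A n w) in Hsum.
  2:{ apply event_ext; intro w; split; [intros [n Hn]|intros [n [Hn _]]; eauto].
      destruct (exists_least (fun n => A n w) n Hn) as [m Hm]; exists m; exact Hm. }
  assert (HDn : forall n, P (D n) = 0).
  { intro n; apply (prob_null_sub (D n) (A n)); auto; intros w []; auto. }
  apply (uniqueness_sum _ _ _ Hsum), infinite_sum_eventually with O.
  intros n _; induction n; simpl; rewrite ?IHn, HDn; ring.
Qed.

Lemma prob_eq_as (G A B : Om -> Prop) : F G -> P G = 1 -> F A -> F B ->
  (forall w, G w -> (A w <-> B w)) -> P A = P B.
Proof.
  intros HG HG1 HA HB H.
  assert (Hbad : P (fun w => ~ G w) = 0) by (rewrite prob_not; auto; lra).
  assert (Hnull : forall C, F C -> P (fun w => C w /\ ~ G w) = 0).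
  { intros C HC; apply (prob_null_sub _ (fun w => ~ G w)); auto.
    - apply meas_and, meas_not; auto.
    - apply meas_not; auto.
    - tauto. }
  rewrite (prob_split A G), (prob_split B G), !Hnull; auto.
  do 2 f_equal; apply event_ext; intro w; split; intros [H1 H2]; split; auto; apply (H w H2); auto.
Qed.

Section Markov.

Variables (Q : nat -> Om -> nat) (p0 : nat -> R) (p : nat -> nat -> R).
Hypothesis HQ : is_markov F P Q p0 p.

Definition hit (j : nat) : R := P (G_ge1 Q j).

Lemma meas_state (k j : nat) : F (fun w => Q k w = j).
Proof. exact (proj1 HQ k j). Qed.

Ltac measurability :=
  repeat first
    [ apply meas_const | apply meas_state | apply meas_and | apply meas_or | apply meas_not
    | apply meas_impl | apply meas_all; intro | apply meas_ex; intro ].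

Lemma meas_visited (j : nat) : F (G_ge1 Q j).
Proof. unfold G_ge1; measurability. Qed.

Lemma meas_G_eq (j n : nat) : F (G_eq Q j n).
Proof.
  apply meas_ex_list; intro l; apply meas_and; [apply meas_const|apply meas_and; [apply meas_const|]].
  apply meas_all; intro k; destruct (classic (In k l)).
  - apply (meas_ext (fun w => Q k w = j)); [intro; tauto|measurability].
  - apply (meas_ext (fun w => ~ Q k w = j)); [intro; tauto|measurability].
Qed.

Lemma meas_G_finite (j : nat) : F (G_finite Q j).
Proof. apply meas_ex; intro n; apply meas_G_eq. Qed.

Lemma meas_visit_profile (Z V : list nat) : F (visit_profile Q Z V).
Proof.
  apply meas_and; apply meas_all; intro; apply meas_impl; [apply meas_G_eq|apply meas_visited].
Qed.

Lemma meas_state_le (k l : nat) : F (fun w => (Q k w <= Q l w)%nat).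
Proof.
  apply (meas_ext (fun w => ~ exists a b, (b < a)%nat /\ Q k w = a /\ Q l w = b)).
  - intro w; split; [intros H; apply Nat.nlt_ge; intro; apply H; eauto|intros H [a [b Hab]]; lia].
  - measurability.
Qed.

Lemma meas_monotone_path : F (monotone_path Q).
Proof.
  apply meas_all; intro k; apply meas_and; [|apply meas_state_le].
  apply (meas_ext (fun w => ~ Q k w = O)); [intro; lia|measurability].
Qed.

Lemma meas_jump_prefix (n : nat) (x : nat -> nat) : F (jump_prefix Q n x).
Proof.
  apply (meas_ex_fun n).
  - intro t; measurability.
  - intros t t' w Htt [H1 [H2 H3]]; split; [|split].
    + rewrite <- Htt by lia; auto.
    + intros k Hk; rewrite <- !Htt by lia; auto.
    + rewrite <- Htt by lia; auto.
Qed.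

Definition path_window (m n : nat) (y : nat -> nat) (w : Om) : Prop :=
  forall k, (m <= k)%nat -> (k <= m + n)%nat -> Q k w = y k.

Lemma window_marginal (m n : nat) (y : nat -> nat) :
  infinite_sum (fun c => P (path_window m (S n) (fun k => if Nat.eqb k m then c else y k)))
               (P (path_window (S m) n y)).
Proof.
  replace (path_window (S m) n y)
    with (fun w => exists c, path_window m (S n) (fun k => if Nat.eqb k m then c else y k) w).
  2:{ apply event_ext; intro w; unfold path_window; split.
      - intros [c H] k Hk1 Hk2; specialize (H k); destruct (Nat.eqb_spec k m); [lia|apply H; lia].
      - intros H; exists (Q m w); intros k Hk1 Hk2.
        destruct (Nat.eqb_spec k m) as [->|]; auto; apply H; lia. }
  apply (ps_sigma_add _ _ _ HP).
  - intro c; unfold path_window; measurability.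
  - intros c1 c2 w Hne H1 H2; apply Hne.
    assert (E1 := H1 m (le_n m) ltac:(lia)); assert (E2 := H2 m (le_n m) ltac:(lia)).
    cbv beta in E1, E2; rewrite Nat.eqb_refl in E1, E2; congruence.
Qed.

Lemma prob_path_window (m n : nat) (y : nat -> nat) :
  P (path_window m n y) =
  P (fun w => Q m w = y m) * prod_upto (fun k => p (y (m + k)%nat) (y (S (m + k)))) n.
Proof.
  revert n y; induction m as [|m IH]; intros n y.
  - assert (Hpath : forall n', path_window 0 n' y = fun w => forall k, (k <= n')%nat -> Q k w = y k).
    { intro n'; apply event_ext; intro w; unfold path_window; split; intros H k; intros; apply H; lia. }
    replace (fun w => Q O w = y O) with (path_window 0 0 y)
      by (apply event_ext; intro w; unfold path_window; split;
          [intros H; apply H|intros H k ? ?; replace k with O by lia]; auto; lia).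
    rewrite !Hpath, !(proj2 HQ); unfold path_prob; simpl; ring.
  - set (tail n' y' := prod_upto (fun k => p (y' (S m + k)%nat) (y' (S (S m + k)))) n').
    assert (Hterm : forall n' y' c,
      P (path_window m (S n') (fun k => if Nat.eqb k m then c else y' k)) =
      P (fun w => Q m w = c) * p c (y' (S m)) * tail n' y').
    { intros n' y' c; rewrite IH, prod_upto_Sl, Nat.add_0_r, Nat.eqb_refl, Rmult_assoc.
      replace (Nat.eqb (S m) m) with false by (symmetry; apply Nat.eqb_neq; lia).
      do 2 f_equal; apply prod_upto_ext; intros k Hk.
      replace (Nat.eqb (m + S k) m) with false by (symmetry; apply Nat.eqb_neq; lia).
      replace (Nat.eqb (S (m + S k)) m) with false by (symmetry; apply Nat.eqb_neq; lia).
      replace (m + S k)%nat with (S m + k)%nat by lia; auto. }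
    assert (Hstep := window_marginal m 0 y).
    replace (path_window (S m) 0 y) with (fun w => Q (S m) w = y (S m)) in Hstep.
    2:{ apply event_ext; intro w; unfold path_window; split;
          [intros H k ? ?; replace k with (S m) by lia; auto|].
        intros H; apply H; lia. }
    apply (infinite_sum_ext _ _ _ (Hterm 0%nat y)) in Hstep.
    apply (uniqueness_sum _ _ _ (window_marginal m n y)).
    apply (infinite_sum_ext (fun c => P (fun w => Q m w = c) * p c (y (S m)) * tail 0%nat y * tail n y)).
    { intro c; rewrite Hterm; unfold tail; simpl; ring. }
    apply infinite_sum_scal_r; exact Hstep.
Qed.

Lemma prob_step (k a b : nat) :
  P (fun w => Q k w = a /\ Q (S k) w = b) = P (fun w => Q k w = a) * p a b.
Proof.
  set (y i := if Nat.eqb i k then a else b).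
  replace (fun w => Q k w = a /\ Q (S k) w = b) with (path_window k 1 y).
  - rewrite prob_path_window; simpl; unfold y; rewrite Nat.add_0_r, Nat.eqb_refl.
    replace (Nat.eqb (S k) k) with false by (symmetry; apply Nat.eqb_neq; lia); ring.
  - apply event_ext; intro w; unfold path_window, y; split.
    + intros H; split; [specialize (H k); rewrite Nat.eqb_refl in H; apply H; lia|].
      specialize (H (S k)); replace (Nat.eqb (S k) k) with false in H
        by (symmetry; apply Nat.eqb_neq; lia); apply H; lia.
    + intros [H1 H2] i Hi1 Hi2; destruct (Nat.eqb_spec i k) as [->|]; auto.
      replace i with (S k) by lia; auto.
Qed.

Hypothesis Hp0 : is_distribution p0.
Hypothesis Hp : is_transition p.
Hypothesis Hinc : weakly_increasing_kernel p.

Lemma prob_state_0 (k : nat) : P (fun w => Q k w = O) = 0.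
Proof.
  induction k.
  - replace (fun w => Q O w = O) with (fun w => forall i, (i <= 0)%nat -> Q i w = (fun _ => O) i).
    + rewrite (proj2 HQ); unfold path_prob; simpl; rewrite (proj1 Hp0); ring.
    + apply event_ext; intro w; split; [intros H; apply H; lia|intros H i Hi; replace i with O by lia; auto].
  - replace (fun w => Q (S k) w = O) with (fun w => exists c, Q k w = c /\ Q (S k) w = O).
    + apply prob_ex_null; [intro c; measurability|intro c].
      rewrite prob_step; destruct c; [rewrite IHk|rewrite (proj1 (Hp (S c) ltac:(lia)))]; ring.
    + apply event_ext; intro w; split; [intros [c [_ H]]; auto|intros H; exists (Q k w); auto].
Qed.

Lemma prob_monotone_path : P (monotone_path Q) = 1.
Proof.
  enough (Hbad : P (fun w => ~ monotone_path Q w) = 0)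
    by (rewrite prob_not in Hbad; [lra|apply meas_monotone_path]).
  replace (fun w => ~ monotone_path Q w) with (fun w => exists k, exists n,
    match n with
    | O => Q k w = O
    | S a => exists b, (b < a)%nat /\ Q k w = a /\ Q (S k) w = b
    end).
  2:{ apply event_ext; intro w; unfold monotone_path; split.
      - intros [k [[|a] H]] Hm; specialize (Hm k); [lia|destruct H as [b ?]; lia].
      - intros H; apply not_all_ex_not in H; destruct H as [k Hk]; exists k.
        destruct (Nat.eq_dec (Q k w) O); [exists O; auto|exists (S (Q k w)), (Q (S k) w); lia]. }
  apply prob_ex_null; [intro k; apply meas_ex; intros [|a]; measurability|intro k].
  apply prob_ex_null; [intros [|a]; measurability|intros [|a]; [apply prob_state_0|]].
  apply prob_ex_null; [intro b; measurability|intro b].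
  destruct (Nat.lt_ge_cases b a) as [Hba|Hab].
  - apply (prob_null_sub _ (fun w => Q k w = a /\ Q (S k) w = b)); try measurability; [tauto|].
    rewrite prob_step, Hinc by auto; ring.
  - replace (fun w => (b < a)%nat /\ Q k w = a /\ Q (S k) w = b) with (fun _ : Om => False).
    + apply prob_False.
    + apply event_ext; intro; lia.
Qed.

Lemma prob_jump_prefix_not_increasing (n : nat) (x : nat -> nat) :
  ~ increasing_states n x -> P (jump_prefix Q n x) = 0.
Proof.
  intros Hx; rewrite <- prob_False.
  apply (prob_eq_as (monotone_path Q)); auto using meas_monotone_path, prob_monotone_path,
    meas_jump_prefix, meas_False.
  intros w Hw; rewrite (jump_prefix_iff Q w Hw); tauto.
Qed.

Lemma prob_G_eq_0 (j : nat) : P (G_eq Q j 0) = 1 - hit j.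
Proof.
  unfold hit; rewrite <- prob_not by apply meas_visited; f_equal.
  apply event_ext; intro w; apply G_eq_0_iff.
Qed.

Hypothesis Hind : G_independent P Q.

(* Independence is stated for events {G_j = n}; the events {G_j >= 1} are reached by
   splitting off one visited state at a time. *)
Lemma prob_visit_profile (V Z : list nat) :
  NoDup (Z ++ V) -> (forall m, In m (Z ++ V) -> (1 <= m)%nat) ->
  P (visit_profile Q Z V) =
  prod_list (fun m => 1 - hit m) Z * prod_list hit V.
Proof.
  revert Z; induction V as [|v V IH]; intros Z Hnd Hpos.
  - rewrite app_nil_r in Hnd, Hpos; unfold prod_list at 2; simpl; rewrite Rmult_1_r.
    replace (visit_profile Q Z nil) with (fun w => forall j, In j Z -> G_eq Q j ((fun _ => O) j) w).
    + rewrite Hind; auto; apply prod_list_ext; intros; apply prob_G_eq_0.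
    + apply event_ext; intro w; unfold visit_profile; simpl; tauto.
  - assert (Hnd1 : NoDup (Z ++ V)) by (eapply NoDup_remove_1; eauto).
    assert (Hnd2 : NoDup ((v :: Z) ++ V)).
    { apply (Permutation_NoDup (l := Z ++ v :: V)); auto.
      apply Permutation_sym, Permutation_middle. }
    assert (Hpos1 : forall m, In m (Z ++ V) -> (1 <= m)%nat).
    { intros m Hm; apply Hpos; apply in_app_or in Hm; apply in_or_app; simpl; tauto. }
    assert (Hpos2 : forall m, In m ((v :: Z) ++ V) -> (1 <= m)%nat).
    { intros m [<-|Hm]; apply Hpos, in_or_app; simpl; auto.
      apply in_app_or in Hm; simpl; tauto. }
    assert (E1 := IH Z Hnd1 Hpos1); assert (E2 := IH (v :: Z) Hnd2 Hpos2).
    rewrite (prob_split _ (G_ge1 Q v)) in E1 by (apply meas_visit_profile || apply meas_visited).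
    replace (fun w => visit_profile Q Z V w /\ G_ge1 Q v w) with (visit_profile Q Z (v :: V)) in E1.
    2:{ apply event_ext; intro w; unfold visit_profile; simpl; split.
        - intros [A B]; split; [split; [auto|intros v' Hv'; apply B; right; auto]|apply B; left; auto].
        - intros [[A B] C]; split; [auto|intros v' [<-|Hv']; auto]. }
    replace (fun w => visit_profile Q Z V w /\ ~ G_ge1 Q v w) with (visit_profile Q (v :: Z) V) in E1.
    2:{ apply event_ext; intro w; unfold visit_profile; simpl; rewrite <- G_eq_0_iff; split.
        - intros [A B]; split; [split; [intros z Hz; apply A; right; auto|auto]|apply A; left; auto].
        - intros [[A B] C]; split; [intros z [<-|Hz]; auto|auto]. }
    rewrite E2 in E1; unfold prod_list in *; simpl in *; lra.
Qed.

Lemma prob_jump_prefix (n : nat) (x : nat -> nat) : increasing_states n x ->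
  P (jump_prefix Q n x) =
  prod_list (fun m => 1 - hit m) (skipped_states n x) * prod_list hit (visited_states n x).
Proof.
  intros Hx; destruct (skipped_visited_states n x Hx) as [Hnd Hrange].
  rewrite <- prob_visit_profile; auto; [|intros m Hm; apply Hrange in Hm; lia].
  apply (prob_eq_as (monotone_path Q)); auto using meas_monotone_path, prob_monotone_path,
    meas_jump_prefix, meas_visit_profile.
  intros w Hw; rewrite (jump_prefix_iff Q w Hw); tauto.
Qed.

Hypothesis Hinf : forall N : nat, exists j, (N <= j)%nat /\ 0 < p0 j.
Hypothesis Hfin : forall j, (1 <= j)%nat -> P (G_finite Q j) = 1.
Hypothesis Hvis : forall j, (1 <= j)%nat -> P (G_eq Q j 0) < 1.

(* [survival n = P (Q 0 > n)], as shown by [sum_p0_survival]. *)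
Definition survival (n : nat) : R := prod_upto (fun k => 1 - hit (S k)) n.

Lemma hit_bounds (j : nat) : 0 <= hit j <= 1.
Proof. split; [apply prob_nonneg|apply prob_le_1]; apply meas_visited. Qed.

Lemma hit_pos (j : nat) : (1 <= j)%nat -> 0 < hit j.
Proof. intros Hj; specialize (Hvis j Hj); rewrite prob_G_eq_0 in Hvis; lra. Qed.

Lemma prob_constant_path (j m : nat) : P (fun w => forall k, (k <= m)%nat -> Q k w = j) = p0 j * p j j ^ m.
Proof. rewrite (proj2 HQ m (fun _ => j)); unfold path_prob; rewrite prod_upto_const; auto. Qed.

Lemma prob_initial_state (j : nat) : P (fun w => Q O w = j) = p0 j.
Proof.
  rewrite <- (Rmult_1_r (p0 j)), <- (pow_O (p j j)), <- prob_constant_path; f_equal.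
  apply event_ext; intro w; split; [intros H k Hk; replace k with O by lia; auto|intros H; apply H; lia].
Qed.

Lemma initial_law_factor (j : nat) : (1 <= j)%nat -> p0 j = survival (j - 1) * hit j.
Proof.
  intros Hj; assert (H := prob_jump_prefix 0 (fun _ => j) Hj); simpl in H.
  rewrite prod_list_seq in H; unfold prod_list in H; simpl in H.
  replace (jump_prefix Q 0 (fun _ => j)) with (fun w => Q O w = j) in H.
  - rewrite prob_initial_state in H; rewrite H; unfold survival, hit; ring.
  - apply event_ext; intro w; rewrite jump_prefix_0_iff; tauto.
Qed.

Lemma survival_succ (n : nat) : survival (S n) = survival n - p0 (S n).
Proof.
  rewrite (initial_law_factor (S n)) by lia; replace (S n - 1)%nat with n by lia.
  unfold survival at 1; simpl; fold (survival n); ring.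
Qed.

Lemma sum_p0_survival (N : nat) : sum_f_R0 p0 N = 1 - survival N.
Proof.
  induction N; simpl; [rewrite (proj1 Hp0); unfold survival; simpl; ring|].
  rewrite IHN, survival_succ; ring.
Qed.

Lemma survival_cv0 : Un_cv survival 0.
Proof.
  intros eps Heps; destruct (proj2 (proj2 Hp0) eps Heps) as [N HN]; exists N; intros n Hn.
  specialize (HN n Hn); rewrite sum_p0_survival in HN; unfold Rdist in *.
  replace (survival n - 0) with (- (1 - survival n - 1)) by ring; rewrite Rabs_Ropp; auto.
Qed.

Lemma survival_nonneg (n : nat) : 0 <= survival n.
Proof.
  induction n; unfold survival; simpl; [lra|fold (survival n)].
  pose proof (hit_bounds (S n)); nra.
Qed.

Lemma survival_antitone (n m : nat) : (n <= m)%nat -> survival m <= survival n.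
Proof.
  induction 1; [lra|unfold survival at 1; simpl; fold (survival m)].
  pose proof (hit_bounds (S m)); pose proof (survival_nonneg m); nra.
Qed.

Lemma survival_pos (n : nat) : 0 < survival n.
Proof.
  destruct (Rle_lt_dec (survival n) 0) as [Hle|]; auto; exfalso.
  destruct (Hinf (S n)) as [j [Hj Hpj]]; rewrite initial_law_factor in Hpj by lia.
  assert (survival (j - 1) = 0).
  { pose proof (survival_antitone n (j - 1) ltac:(lia)); pose proof (survival_nonneg (j - 1)); lra. }
  rewrite H in Hpj; lra.
Qed.

Lemma tail_sum_survival (j : nat) : (1 <= j)%nat -> tail_sum p0 j (survival (j - 1)).
Proof.
  intros Hj; unfold tail_sum.
  assert (Hpartial : forall N, sum_f_R0 (fun n => p0 (j + n)%nat) N = survival (j - 1) - survival (j + N)).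
  { induction N; simpl.
    - rewrite Nat.add_0_r; assert (E := survival_succ (j - 1)); replace (S (j - 1)) with j in E by lia; lra.
    - rewrite IHN, (Nat.add_succ_r j N), survival_succ; ring. }
  intros eps Heps; destruct (survival_cv0 eps Heps) as [N HN]; exists N; intros n Hn.
  rewrite Hpartial; unfold Rdist in *; specialize (HN (j + n)%nat ltac:(lia)).
  replace (survival (j - 1) - survival (j + n) - survival (j - 1)) with (- (survival (j + n) - 0)) by ring.
  rewrite Rabs_Ropp; auto.
Qed.

Lemma tail_sum_eq_survival (j : nat) (T : R) : (1 <= j)%nat -> tail_sum p0 j T -> T = survival (j - 1).
Proof. intros Hj HT; apply (uniqueness_sum _ _ _ HT), tail_sum_survival; auto. Qed.

Lemma hit_lt_1 (j : nat) : (1 <= j)%nat -> hit j < 1.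
Proof.
  intros Hj; assert (H := survival_pos j); unfold survival in H.
  replace j with (S (j - 1)) in H at 1 by lia; simpl in H; fold (survival (j - 1)) in H.
  replace (S (j - 1)) with j in H by lia.
  pose proof (survival_pos (j - 1)); destruct (Rlt_le_dec (hit j) 1); auto; nra.
Qed.

Lemma hit_eq_ratio (j : nat) : (1 <= j)%nat -> hit j = p0 j / survival (j - 1).
Proof. intros Hj; rewrite initial_law_factor by auto; field; apply Rgt_not_eq, survival_pos. Qed.

Lemma p0_pos (j : nat) : (1 <= j)%nat -> 0 < p0 j.
Proof.
  intros Hj; rewrite initial_law_factor by auto.
  pose proof (survival_pos (j - 1)); pose proof (hit_pos j Hj); nra.
Qed.

Lemma stay_le_1 (i : nat) : (1 <= i)%nat -> p i i <= 1.
Proof.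
  intros Hi.
  assert (H : P (fun w => Q O w = i /\ Q 1%nat w = i) <= P (fun w => Q O w = i))
    by (apply prob_le; try measurability; tauto).
  rewrite prob_step, prob_initial_state in H; pose proof (p0_pos i Hi); nra.
Qed.

(* If [p i i = 1], the chain started at [i] a.s. never leaves [i]: leaving after exactly
   [n] steps has probability [p0 i - p0 i = 0]. *)
Lemma prob_stay_forever (i : nat) : p i i = 1 -> P (fun w => forall k, Q k w = i) = p0 i.
Proof.
  intros Hii; set (Stay w := forall k, Q k w = i).
  set (Stay_upto n w := forall k, (k <= n)%nat -> Q k w = i).
  assert (HStay_upto : forall n, P (Stay_upto n) = p0 i)
    by (intro n; unfold Stay_upto; rewrite prob_constant_path, Hii, pow1; ring).
  assert (Hleave : P (fun w => Q O w = i /\ ~ Stay w) = 0).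
  { apply (prob_null_sub _ (fun w => exists n, Stay_upto n w /\ ~ Q (S n) w = i));
      unfold Stay_upto, Stay; try measurability.
    - intros w [H0 H1]; apply not_all_ex_not in H1; destruct H1 as [k Hk].
      destruct (exists_least (fun k => Q k w <> i) k Hk) as [[|k'] [Hk1 Hk2]]; [contradiction|].
      exists k'; split; auto; intros s Hs; apply NNPP; intro; apply (Hk2 s); auto; lia.
    - apply prob_ex_null; [intro n; measurability|intro n].
      assert (Hs := prob_split (Stay_upto n) (fun w => Q (S n) w = i) ltac:(unfold Stay_upto; measurability)
                               ltac:(measurability)); cbv beta in Hs.
      replace (fun w => Stay_upto n w /\ Q (S n) w = i) with (Stay_upto (S n)) in Hs.
      + rewrite !HStay_upto in Hs; unfold Stay_upto in Hs; lra.
      + apply event_ext; intro w; unfold Stay_upto; split.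
        * intros H; split; intros; apply H; lia.
        * intros [H1 H2] k Hk; destruct (Nat.eq_dec k (S n)) as [->|]; auto; apply H1; lia. }
  rewrite <- prob_initial_state, (prob_split (fun w => Q O w = i) Stay)
    by (unfold Stay; measurability); cbv beta.
  rewrite Hleave, Rplus_0_r; f_equal.
  apply event_ext; intro w; unfold Stay; split; [intros H; split; auto|tauto].
Qed.

Lemma stay_lt_1 (i : nat) : (1 <= i)%nat -> p i i < 1.
Proof.
  intros Hi; destruct (Rle_lt_or_eq_dec _ _ (stay_le_1 i Hi)) as [|Hii]; auto; exfalso.
  assert (Hunion : P (fun w => G_finite Q i w \/ forall k, Q k w = i) = 1 + p0 i).
  { rewrite prob_or_disjoint, Hfin, prob_stay_forever; auto; try (apply meas_G_finite || measurability).
    intros w Hw; apply (G_finite_not_constant Q w i Hw). }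
  assert (Hle := prob_le_1 (fun w => G_finite Q i w \/ forall k, Q k w = i)
                  ltac:(apply meas_or; [apply meas_G_finite|measurability])).
  pose proof (p0_pos i Hi); lra.
Qed.

(* The jump from [i] to [j] happens after a geometric holding time in [i]. *)
Lemma prob_jump_once (i j : nat) : (1 <= i)%nat -> (i < j)%nat ->
  P (jump_prefix Q 1 (fun k => if Nat.eqb k 0 then i else j)) = p0 i * p i j / (1 - p i i).
Proof.
  intros Hi Hij; set (x k := if Nat.eqb k 0 then i else j).
  set (hold m w := forall k, (k <= S m)%nat -> Q k w = if Nat.leb k m then i else j).
  assert (Hev : jump_prefix Q 1 x = fun w => exists m, hold m w).
  { apply event_ext; intro w; unfold hold; split.
    - intros [t [Ht0 [Ht Ht1]]]; destruct (Ht 0%nat ltac:(lia)) as [Hlt [_ Hc]]; rewrite Ht0 in Hlt, Hc.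
      exists (t 1%nat - 1)%nat; intros k Hk; destruct (Nat.leb_spec k (t 1%nat - 1)).
      + apply Hc; lia.
      + replace k with (t 1%nat) by lia; auto.
    - intros [m Hm]; exists (fun k => if Nat.eqb k 0 then 0%nat else S m); split; [reflexivity|split].
      + intros k Hk; replace k with 0%nat by lia; simpl; unfold x; simpl; repeat split; try lia.
        intros s Hs; specialize (Hm s ltac:(lia)); destruct (Nat.leb_spec s m); auto; lia.
      + simpl; unfold x; simpl; specialize (Hm (S m) ltac:(lia)).
        destruct (Nat.leb_spec (S m) m); auto; lia. }
  assert (Hsum : infinite_sum (fun m => P (hold m)) (P (jump_prefix Q 1 x))).
  { rewrite Hev; apply (ps_sigma_add _ _ _ HP); [intro m; unfold hold; measurability|].
    intros m1 m2 w Hne H1 H2; unfold hold in *.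
    destruct (Nat.lt_gt_cases m1 m2) as [[Hl|Hl] _]; auto;
      [specialize (H1 (S m1) ltac:(lia)); specialize (H2 (S m1) ltac:(lia))
      |specialize (H1 (S m2) ltac:(lia)); specialize (H2 (S m2) ltac:(lia))];
      repeat match goal with _ : context [Nat.leb ?a ?b] |- _ => destruct (Nat.leb_spec a b) end; lia. }
  assert (Hterm : forall m, P (hold m) = p0 i * p i j * p i i ^ m).
  { intro m; unfold hold; rewrite (proj2 HQ); unfold path_prob; cbn [prod_upto].
    rewrite (prod_upto_ext _ (fun _ => p i i)), prod_upto_const, Nat.leb_refl.
    - replace (0 <=? m)%nat with true by (symmetry; apply Nat.leb_le; lia).
      replace (S m <=? m)%nat with false by (symmetry; apply Nat.leb_gt; lia); ring.
    - intros k Hk; destruct (Nat.leb_spec k m), (Nat.leb_spec (S k) m); auto; lia. }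
  assert (Hii := stay_lt_1 i Hi); assert (Hii0 := proj1 (proj2 (Hp i Hi)) i).
  apply (uniqueness_sum _ _ _ Hsum).
  replace (p0 i * p i j / (1 - p i i)) with (/ (1 - p i i) * (p0 i * p i j)) by (field; lra).
  apply (infinite_sum_ext (fun m => 1 * p i i ^ m * (p0 i * p i j))); [intro m; rewrite Hterm; ring|].
  apply infinite_sum_scal_r, GP_infinite; rewrite Rabs_right; lra.
Qed.

Lemma jump_kernel_hit_form (i j : nat) : (1 <= i)%nat -> (i < j)%nat ->
  p i j = (1 - p i i) * hit j * prod_upto (fun n => 1 - hit (S i + n)%nat) (j - S i).
Proof.
  intros Hi Hij.
  assert (H := prob_jump_prefix 1 (fun k => if Nat.eqb k 0 then i else j) ltac:(simpl; lia)).
  rewrite prob_jump_once in H by auto; simpl in H.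
  rewrite prod_list_app, !prod_list_seq in H; unfold prod_list in H; simpl in H.
  change (prod_upto (fun k => 1 - hit (S k)) (i - 1)) with (survival (i - 1)) in H.
  rewrite (initial_law_factor i Hi) in H.
  assert (Hs := survival_pos (i - 1)); assert (Hh := hit_pos i Hi); assert (Hii := stay_lt_1 i Hi).
  replace (p i j) with ((1 - p i i) / (survival (i - 1) * hit i) *
                        (survival (i - 1) * hit i * p i j / (1 - p i i)))
    by (field; repeat split; apply Rgt_not_eq; lra).
  change (fun n => 1 - hit (S i + n)%nat) with (fun k => 1 - hit (S (i + k))).
  rewrite H; field; repeat split; apply Rgt_not_eq; lra.
Qed.

Lemma survival_split (i j : nat) : (i < j)%nat ->
  survival (j - 1) = survival i * prod_upto (fun k => 1 - hit (S i + k)%nat) (j - S i).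
Proof. intros Hij; replace (j - 1)%nat with (i + (j - S i))%nat by lia; apply prod_upto_add. Qed.

Lemma jump_kernel_tail_form (i j : nat) : (1 <= i)%nat -> (i < j)%nat ->
  p i j = (1 - p i i) * (p0 j / survival i).
Proof.
  intros Hi Hij; rewrite jump_kernel_hit_form, (initial_law_factor j), (survival_split i j) by (auto; lia).
  field; apply Rgt_not_eq, survival_pos.
Qed.

Lemma prob_hold_exactly (j n : nat) :
  P (fun w => (forall k, (k <= n)%nat -> Q k w = j) /\ Q (S n) w <> j) = p0 j * p j j ^ n * (1 - p j j).
Proof.
  assert (Hs := prob_split (fun w => forall k, (k <= n)%nat -> Q k w = j) (fun w => Q (S n) w = j)
                  ltac:(measurability) ltac:(measurability)); cbv beta in Hs.
  replace (fun w => (forall k, (k <= n)%nat -> Q k w = j) /\ Q (S n) w = j)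
    with (fun w => forall k, (k <= S n)%nat -> Q k w = j) in Hs.
  - rewrite !prob_constant_path in Hs; simpl in Hs; lra.
  - apply event_ext; intro w; split.
    + intros H; split; intros; apply H; lia.
    + intros [H1 H2] k Hk; destruct (Nat.eq_dec k (S n)) as [->|]; auto; apply H1; lia.
Qed.

(* Starting in [j] means that no state below [j] is visited; independence of [G_j] from
   [G_1, ..., G_(j-1)] then separates the holding time in [j] from the initial state. *)
Lemma visits_law (j n : nat) : (1 <= j)%nat -> P (G_eq Q j (S n)) = hit j * (1 - p j j) * p j j ^ n.
Proof.
  intros Hj; set (v k := if Nat.eqb k j then S n else O).
  assert (Hnd : NoDup (j :: seq 1 (j - 1))) by (constructor; [rewrite in_seq; lia|apply seq_NoDup]).
  assert (HI := Hind (j :: seq 1 (j - 1)) v Hnd).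
  specialize (HI ltac:(intros k [<-|Hk]; auto; apply in_seq in Hk; lia)).
  change (fold_right (fun k acc => P (G_eq Q k (v k)) * acc) 1 (j :: seq 1 (j - 1)))
    with (P (G_eq Q j (v j)) * prod_list (fun k => P (G_eq Q k (v k))) (seq 1 (j - 1))) in HI.
  rewrite (prod_list_ext _ (fun k => 1 - hit k)), prod_list_seq in HI.
  2:{ intros k Hk; apply in_seq in Hk; unfold v; destruct (Nat.eqb_spec k j); [lia|apply prob_G_eq_0]. }
  change (prod_upto (fun k => 1 - hit (1 + k)%nat) (j - 1)) with (survival (j - 1)) in HI.
  replace (v j) with (S n) in HI by (unfold v; rewrite Nat.eqb_refl; auto).
  assert (Has : P (fun w => forall k, In k (j :: seq 1 (j - 1)) -> G_eq Q k (v k) w) =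
                P (fun w => (forall k, (k <= n)%nat -> Q k w = j) /\ Q (S n) w <> j)).
  { apply (prob_eq_as (monotone_path Q)); auto using meas_monotone_path, prob_monotone_path;
      [apply meas_all; intro k; apply meas_impl, meas_G_eq|measurability|].
    intros w Hw; rewrite <- (holding_time_iff Q w Hw), (initial_state_iff Q w Hw); split.
    - intros H; assert (HGj := H j (or_introl eq_refl)); unfold v in HGj; rewrite Nat.eqb_refl in HGj.
      split; [split|auto]; [|eapply G_eq_S_visited; eauto].
      intros m Hm; apply G_eq_0_iff; assert (Hin : In m (seq 1 (j - 1))) by (apply in_seq; lia).
      specialize (H m (or_intror Hin)); unfold v in H; destruct (Nat.eqb_spec m j); [lia|auto].
    - intros [[H1 H2] H3] k [<-|Hk]; unfold v; [rewrite Nat.eqb_refl; auto|].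
      apply in_seq in Hk; destruct (Nat.eqb_spec k j); [lia|apply G_eq_0_iff, H1; lia]. }
  rewrite HI, prob_hold_exactly, initial_law_factor in Has by auto.
  assert (Hs := survival_pos (j - 1)).
  apply (Rmult_eq_reg_r (survival (j - 1))); [lra|apply Rgt_not_eq; lra].
Qed.

Lemma stay_eq_hit_iff_geometric_visits :
  (forall i, (1 <= i)%nat -> p i i = hit i) <->
  (forall j, (1 <= j)%nat -> exists theta, 0 <= theta < 1 /\
     forall n, P (G_eq Q j n) = (1 - theta) * theta ^ n).
Proof.
  split.
  - intros Hstay j Hj; exists (hit j); split; [pose proof (hit_pos j Hj); pose proof (hit_lt_1 j Hj); lra|].
    intros [|n]; [rewrite prob_G_eq_0; simpl; ring|rewrite visits_law, Hstay by auto; simpl; ring].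
  - intros Hgeom i Hi; destruct (Hgeom i Hi) as [theta [_ Hn]].
    assert (H0 := Hn 0%nat); assert (H1 := Hn 1%nat).
    rewrite prob_G_eq_0 in H0; rewrite visits_law in H1 by auto; simpl in H0, H1.
    assert (theta = hit i) by lra; subst theta; assert (Hh := hit_pos i Hi).
    apply (Rmult_eq_reg_l (hit i)); [nra|lra].
Qed.

Lemma no_stay_iff_bernoulli_visits :
  (forall i, (1 <= i)%nat -> p i i = 0) <->
  (forall j, (1 <= j)%nat -> exists theta, 0 <= theta <= 1 /\
     P (G_eq Q j 0) = 1 - theta /\ P (G_eq Q j 1) = theta).
Proof.
  split.
  - intros Hstay j Hj; exists (hit j); split; [apply hit_bounds|split; [apply prob_G_eq_0|]].
    rewrite visits_law, Hstay by auto; simpl; ring.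
  - intros Hbern i Hi; destruct (Hbern i Hi) as [theta [_ [H0 H1]]].
    rewrite prob_G_eq_0 in H0; rewrite visits_law in H1 by auto; simpl in H1.
    assert (theta = hit i) by lra; subst theta; assert (Hh := hit_pos i Hi).
    apply (Rmult_eq_reg_l (hit i)); [nra|lra].
Qed.

Lemma stay_eq_hit_iff_weak_record :
  (forall i, (1 <= i)%nat -> p i i = hit i) <-> is_weak_record_kernel p0 p.
Proof.
  split.
  - intros Hstay i j Hi Hj T HT; rewrite (tail_sum_eq_survival i T Hi HT).
    destruct (Nat.leb_spec i j) as [Hij|Hji]; [|apply Hinc; auto].
    destruct (Nat.eq_dec i j) as [<-|Hne]; [rewrite Hstay by auto; apply hit_eq_ratio; auto|].
    rewrite jump_kernel_tail_form, Hstay by (auto; lia).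
    replace (survival i) with (survival (i - 1) * (1 - hit i))
      by (unfold survival; replace i with (S (i - 1)) at 3 by lia; simpl; do 3 f_equal; lia).
    assert (Hs := survival_pos (i - 1)); assert (Hh := hit_lt_1 i Hi).
    field; split; apply Rgt_not_eq; lra.
  - intros Hweak i Hi; rewrite (Hweak i i Hi Hi _ (tail_sum_survival i Hi)), Nat.leb_refl.
    symmetry; apply hit_eq_ratio; auto.
Qed.

Lemma no_stay_iff_strict_record :
  (forall i, (1 <= i)%nat -> p i i = 0) <-> is_strict_record_kernel p0 p.
Proof.
  split.
  - intros Hstay i j Hi Hj T HT; rewrite (tail_sum_eq_survival (S i) T ltac:(lia) HT).
    replace (S i - 1)%nat with i by lia; destruct (Nat.ltb_spec i j).
    + rewrite jump_kernel_tail_form, Hstay by auto; ring.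
    + destruct (Nat.eq_dec i j) as [<-|]; [apply Hstay; auto|apply Hinc; lia].
  - intros Hstrict i Hi; rewrite (Hstrict i i Hi Hi _ (tail_sum_survival (S i) ltac:(lia))).
    rewrite Nat.ltb_irrefl; auto.
Qed.

Lemma jump_prefix_product (n : nat) (x : nat -> nat) : increasing_states n x ->
  prod_list (fun m => 1 - hit m) (skipped_states n x) * prod_list hit (visited_states n x) =
  p0 (x O) * prod_upto (fun k => p0 (x (S k)) / survival (x k)) n.
Proof.
  induction n; intros Hx.
  - simpl in *; rewrite prod_list_seq, (initial_law_factor (x O)) by auto.
    unfold prod_list, survival; simpl; ring.
  - destruct Hx as [Hx Hlt]; simpl skipped_states; simpl visited_states; simpl prod_upto.
    rewrite <- Rmult_assoc, <- IHn by auto; rewrite prod_list_app; unfold prod_list at 3; simpl fold_right.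
    fold (prod_list hit (visited_states n x)).
    rewrite prod_list_seq, (initial_law_factor (x (S n))), (survival_split (x n)) by lia.
    field; apply Rgt_not_eq, survival_pos.
Qed.

Lemma jump_chain_law (n : nat) (x : nat -> nat) :
  P (jump_prefix Q n x) =
  p0 (x O) * prod_upto (fun k => if Nat.ltb (x k) (x (S k)) then p0 (x (S k)) / survival (x k) else 0) n.
Proof.
  destruct (classic (increasing_states n x)) as [Hx|Hx].
  - rewrite prob_jump_prefix, jump_prefix_product by auto; f_equal.
    apply prod_upto_ext; intros k Hk; rewrite (proj2 (Nat.ltb_lt _ _)); auto.
    apply increasing_states_lt with n; auto.
  - rewrite prob_jump_prefix_not_increasing by auto.
    destruct (not_increasing_states n x Hx) as [H0|[k [Hk Hle]]].
    + rewrite H0, (proj1 Hp0); ring.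
    + rewrite (prod_upto_eq0 _ n k); auto; [ring|].
      rewrite (proj2 (Nat.ltb_ge _ _)); auto; lia.
Qed.

End Markov.
End Probability.

Theorem mainTheorem11
  (Om : Type) (F : (Om -> Prop) -> Prop) (P : (Om -> Prop) -> R)
  (Q : nat -> Om -> nat) (p0 : nat -> R) (p : nat -> nat -> R)
  (HP : is_prob Om F P)
  (Hp0 : is_distribution p0)
  (Hp : is_transition p)
  (Hinc : weakly_increasing_kernel p)
  (HQ : is_markov F P Q p0 p)
  (Hinf : forall N : nat, exists j, (N <= j)%nat /\ 0 < p0 j)
  (Hfin : forall j, (1 <= j)%nat -> P (G_finite Q j) = 1)
  (Hvis : forall j, (1 <= j)%nat -> P (G_eq Q j 0) < 1)
  (Hind : G_independent P Q) :
  let h := fun j => P (G_ge1 Q j) in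
  (forall j, (1 <= j)%nat -> forall T, tail_sum p0 j T -> h j = p0 j / T) /\
  Un_cv (fun n => prod_upto (fun k => 1 - h (S k)) n) 0 /\
  (forall i, (1 <= i)%nat ->
     p i i < 1 /\
     forall j, (i < j)%nat ->
       p i j = (1 - p i i) * h j * prod_upto (fun n => 1 - h (S i + n)%nat) (j - S i) /\
       (forall T, tail_sum p0 (S i) T -> p i j = (1 - p i i) * (p0 j / T))) /\
  (((forall i, (1 <= i)%nat -> p i i = h i) <->
    (forall j, (1 <= j)%nat -> exists theta, 0 <= theta < 1 /\
        forall n, P (G_eq Q j n) = (1 - theta) * theta ^ n)) /\
   ((forall j, (1 <= j)%nat -> exists theta, 0 <= theta < 1 /\
        forall n, P (G_eq Q j n) = (1 - theta) * theta ^ n) <->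
    is_weak_record_kernel p0 p)) /\
  (((forall i, (1 <= i)%nat -> p i i = 0) <->
    (forall j, (1 <= j)%nat -> exists theta, 0 <= theta <= 1 /\
        P (G_eq Q j 0) = 1 - theta /\ P (G_eq Q j 1) = theta)) /\
   ((forall j, (1 <= j)%nat -> exists theta, 0 <= theta <= 1 /\
        P (G_eq Q j 0) = 1 - theta /\ P (G_eq Q j 1) = theta) <->
    is_strict_record_kernel p0 p)) /\
  (forall (n : nat) (x : nat -> nat) (T : nat -> R),
     (forall k, tail_sum p0 (S (x k)) (T k)) ->
     P (jump_prefix Q n x) =
       p0 (x O) * prod_upto (fun k => if Nat.ltb (x k) (x (S k)) then p0 (x (S k)) / T k else 0) n).
Proof.
  intro h; subst h; cbv beta.
  assert (Htail : forall j T, (1 <= j)%nat -> tail_sum p0 j T -> T = survival (P := P) Q (j - 1))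
    by (intros; eapply tail_sum_eq_survival; eauto).
  split; [|split; [|split; [|split; [split|split; [split|]]]]].
  - intros j Hj T HT; rewrite (Htail j T Hj HT); eapply hit_eq_ratio; eauto.
  - eapply survival_cv0; eauto.
  - intros i Hi; split; [eapply stay_lt_1; eauto|intros j Hij; split].
    + eapply jump_kernel_hit_form; eauto.
    + intros T HT; rewrite (Htail (S i) T ltac:(lia) HT), Nat.sub_succ, Nat.sub_0_r.
      eapply jump_kernel_tail_form; eauto.
  - eapply stay_eq_hit_iff_geometric_visits; eauto.
  - erewrite <- stay_eq_hit_iff_geometric_visits by eauto; eapply stay_eq_hit_iff_weak_record; eauto.
  - eapply no_stay_iff_bernoulli_visits; eauto.
  - erewrite <- no_stay_iff_bernoulli_visits by eauto; eapply no_stay_iff_strict_record; eauto.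
  - intros n x T HT; erewrite jump_chain_law by eauto; f_equal; apply prod_upto_ext; intros k _.
    rewrite (Htail (S (x k)) (T k) ltac:(lia) (HT k)), Nat.sub_succ, Nat.sub_0_r; auto.
Qed.
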